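(* For a binary matrix $\mathbf{X}$, the rectangle cover graph $\mathcal{G}(\mathbf{X})$ contains a $5$-hole (an induced chordless cycle on $5$ vertices) if and only if $\mathbf{X}$ has a submatrix which, after permuting its rows and columns, equals one of $\mathbf{D}_4$, $\mathbf{H}_3$, $\mathbf{H}_3^\top$ or $\mathbf{K}_5$.
   Context: For a binary matrix $\mathbf{X}$, $\mathrm{supp}(\mathbf{X})=\{(i,j):x_{i,j}=1\}$; a submatrix is obtained by deleting rows and columns; a rectangle is a set $I\times J\subseteq\mathrm{supp}(\mathbf{X})$. The rectangle cover graph $\mathcal{G}(\mathbf{X})$ has vertex set $\mathrm{supp}(\mathbf{X})$, two vertices being adjacent iff some rectangle of $\mathbf{X}$ contains both. The matrices: $\mathbf{D}_4=\begin{bmatrix}0&1&1&0\\1&1&1&0\\1&1&1&1\\0&0&1&1\end{bmatrix}$; $\mathbf{H}_3=[\mathbf{1},\mathbf{C}_3]=\begin{bmatrix}1&1&1&0\\1&0&1&1\\1&1&0&1\end{bmatrix}$, where $\mathbf{C}_3$ has $1$s exactly at $(1,1),(1,2),(2,2),(2,3),(3,1),(3,3)$ and $\mathbf{1}$ is the all-ones column; $\mathbf{K}_5\in\{0,1\}^{5\times5}$ is the circulant matrix with $(i,j)$-entry $1$ iff $j-i\equiv 0,1,2 \pmod 5$ (exactly three $1$s in each row and column). *)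

From mathcomp Require Import all_boot all_algebra.
Set Implicit Arguments. Unset Strict Implicit. Unset Printing Implicit Defensive.

(* A binary matrix is a matrix with boolean entries; entry true = 1. *)

Definition in_supp (m n : nat) (X : 'M[bool]_(m, n)) (v : 'I_m * 'I_n) : bool :=
  X v.1 v.2.

Definition is_rectangle (m n : nat) (X : 'M[bool]_(m, n))
  (I : {set 'I_m}) (J : {set 'I_n}) : bool :=
  [forall i in I, forall j in J, X i j].

Definition rc_adj (m n : nat) (X : 'M[bool]_(m, n)) (u v : 'I_m * 'I_n) : bool :=
  [&& u != v,
      in_supp X u, in_supp X v &
      [exists I : {set 'I_m}, exists J : {set 'I_n},
         [&& is_rectangle X I J, u.1 \in I, u.2 \in J, v.1 \in I & v.2 \in J]]].

Definition cyc5_adj (a b : 'I_5) : bool :=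
  (val b == (val a).+1 %% 5) || (val a == (val b).+1 %% 5).

Definition has_5hole (m n : nat) (X : 'M[bool]_(m, n)) : Prop :=
  exists v : 'I_5 -> 'I_m * 'I_n,
    injective v /\ (forall a, in_supp X (v a)) /\
    (forall a b, rc_adj X (v a) (v b) = cyc5_adj a b).

(* X has a submatrix which, after permuting its rows and columns, equals A:
   choose distinct rows f 0,...,f (p-1) and distinct columns g 0,...,g (q-1)
   (in any order) so that X (f i) (g j) = A i j. *)
Definition has_perm_submatrix (m n p q : nat) (X : 'M[bool]_(m, n))
  (A : 'M[bool]_(p, q)) : Prop :=
  exists (f : 'I_p -> 'I_m) (g : 'I_q -> 'I_n),
    injective f /\ injective g /\ forall i j, X (f i) (g j) = A i j.

Definition mx_of_rows (p q : nat) (rows : seq (seq nat)) : 'M[bool]_(p, q) :=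
  \matrix_(i < p, j < q) (nth 0 (nth [::] rows i) j == 1).

Definition D4 : 'M[bool]_(4, 4) :=
  mx_of_rows 4 4 [:: [:: 0; 1; 1; 0];
                     [:: 1; 1; 1; 0];
                     [:: 1; 1; 1; 1];
                     [:: 0; 0; 1; 1]].

Definition C3 : 'M[bool]_(3, 3) :=
  mx_of_rows 3 3 [:: [:: 1; 1; 0];
                     [:: 0; 1; 1];
                     [:: 1; 0; 1]].

Definition H3 : 'M[bool]_(3, 4) := row_mx (const_mx true : 'M[bool]_(3, 1)) C3.

Definition K5 : 'M[bool]_(5, 5) :=
  \matrix_(i < 5, j < 5) ((j + 5 - i) %% 5 <= 2).

From mathcomp Require Import all_boot all_algebra.
Set Implicit Arguments. Unset Strict Implicit. Unset Printing Implicit Defensive.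

(* Write the vertices of a 5-hole of G(X) as (r_a, c_a), a in Z/5.  Two
   support entries are adjacent exactly when both crossing entries are 1 too,
   so a 5-hole amounts to maps r, c for which Y_ab = X(r_a, c_b) is a "hole
   pattern": Y_ab && Y_ba holds iff a = b or a, b are adjacent in C_5.  No
   injectivity is needed for the converse, because in a hole pattern distinct
   vertices have distinct closed neighbourhoods.  Hence a matrix containing a
   hole pattern passes it on to every matrix containing it.  A hole pattern is
   fixed by its entries at the 10 ordered non-adjacent pairs; running through
   all 2^10 choices shows that every hole pattern realizes D4, H3, H3^T or K5,
   and each of these contains a hole pattern.  As the four matrices have
   distinct rows and distinct columns, any realization of them in X is a
   genuine permuted submatrix. *)

(* [inZp] rather than [inord] or [enum]: those go through the opaque [idP] and
   block [vm_compute]. *)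
Definition all_ord n (P : 'I_n.+1 -> bool) : bool :=
  all (fun k => P (inZp k)) (iota 0 n.+1).

Lemma all_ordP n (P : 'I_n.+1 -> bool) : reflect (forall i, P i) (all_ord P).
Proof.
apply: (iffP allP) => [HP i | HP k _]; last exact: HP.
by rewrite -(valZpK i); apply: HP; rewrite mem_iota ltn_ord.
Qed.

Lemma rc_adjE m n (X : 'M[bool]_(m, n)) u v :
  rc_adj X u v = [&& u != v, X u.1 u.2, X v.1 v.2, X u.1 v.2 & X v.1 u.2].
Proof.
rewrite /rc_adj /in_supp.
case: (u != v) => //=; case Xu: (X u.1 u.2) => //=; case Xv: (X v.1 v.2) => //=.
apply/existsP/andP => [[I /existsP[J /and5P[/forallP rectIJ uI uJ vI vJ]]] | [Xuv Xvu]].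
  have inIJ i j : i \in I -> j \in J -> X i j.
    by move=> iI jJ; apply: (implyP (forallP (implyP (rectIJ i) iI) j)).
  by split; apply: inIJ.
exists [set u.1; v.1]; apply/existsP; exists [set u.2; v.2].
apply/and5P; split; rewrite ?inE ?eqxx ?orbT //.
by apply/forallP => i; apply/implyP; rewrite !inE => /orP[]/eqP->;
  apply/forallP => j; apply/implyP; rewrite !inE => /orP[]/eqP->.
Qed.

Lemma cyc5_adj_irrefl (a : 'I_5) : cyc5_adj a a = false.
Proof.
apply/negbTE; move: a; apply/(all_ordP (fun a => ~~ cyc5_adj a a)).
by vm_compute.
Qed.

Definition distinct_lines n k (e : 'I_n.+1 -> 'I_k.+1 -> bool) : bool :=
  all_ord (fun i => all_ord (fun i' => (i == i') || ~~ all_ord (fun j => e i j == e i' j))).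

Lemma distinct_lines_inj n k (e : 'I_n.+1 -> 'I_k.+1 -> bool) :
  distinct_lines e -> forall i i', e i =1 e i' -> i = i'.
Proof.
move=> e_distinct i i' eq_ii'; apply/eqP.
move: e_distinct; rewrite /distinct_lines => /all_ordP/(_ i)/all_ordP/(_ i').
suff -> : all_ord (fun j => e i j == e i' j) by rewrite orbF.
by apply/all_ordP => j; rewrite eq_ii'.
Qed.

Lemma cyc5_closed_nbhd_inj (a b : 'I_5) :
  (forall c, (a == c) || cyc5_adj a c = (b == c) || cyc5_adj b c) -> a = b.
Proof.
by apply: (@distinct_lines_inj _ _ (fun a c : 'I_5 => (a == c) || cyc5_adj a c)); vm_compute.
Qed.

Definition hole_pattern (Y : 'I_5 -> 'I_5 -> bool) : bool :=
  all_ord (fun a => all_ord (fun b => (Y a b && Y b a) == (a == b) || cyc5_adj a b)).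

Lemma hole_patternP Y :
  reflect (forall a b, Y a b && Y b a = (a == b) || cyc5_adj a b) (hole_pattern Y).
Proof.
apply: (iffP (all_ordP _)) => [Y_hole a b | Y_hole a].
  by apply/eqP; move/all_ordP: (Y_hole a).
by apply/all_ordP => b; rewrite Y_hole.
Qed.

Lemma eq_hole_pattern Y Y' : Y =2 Y' -> hole_pattern Y = hole_pattern Y'.
Proof. by move=> eqY; apply: eq_all => a; apply: eq_all => b; rewrite !eqY. Qed.

Lemma has_5holeP m n (X : 'M[bool]_(m, n)) :
  has_5hole X <->
  exists (r : 'I_5 -> 'I_m) (c : 'I_5 -> 'I_n), hole_pattern (fun a b => X (r a) (c b)).
Proof.
split=> [[v [v_inj [v_supp v_adj]]] | [r [c /hole_patternP Y_hole]]].
  have X_v a : X (v a).1 (v a).2 := v_supp a.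
  exists (fun a => (v a).1), (fun a => (v a).2); apply/hole_patternP => a b.
  have [<- | neq_ab] := eqVneq a b; first by rewrite andbb X_v.
  by rewrite -v_adj rc_adjE (inj_eq v_inj) neq_ab !X_v.
pose v a := (r a, c a).
have v_inj : injective v.
  move=> a b [ra_rb ca_cb]; apply: cyc5_closed_nbhd_inj => d.
  by rewrite -!Y_hole ra_rb ca_cb.
have X_v a : X (r a) (c a) by have := Y_hole a a; rewrite eqxx andbb.
exists v; split; [exact: v_inj | split; first exact: X_v].
move=> a b; rewrite rc_adjE /= !X_v.
have [<- | neq_ab] := eqVneq a b; first by rewrite eqxx cyc5_adj_irrefl.
by rewrite (inj_eq v_inj) neq_ab /= Y_hole (negbTE neq_ab).
Qed.

Lemma has_5hole_perm_submatrix m n p q (X : 'M[bool]_(m, n)) (A : 'M[bool]_(p, q)) :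
  has_perm_submatrix X A -> has_5hole A -> has_5hole X.
Proof.
move=> [f [g [_ [_ XA]]]] /has_5holeP[r [c A_hole]]; apply/has_5holeP.
exists (f \o r), (g \o c).
by rewrite (@eq_hole_pattern _ (fun a b => A (r a) (c b))) // => a b; apply: XA.
Qed.

Lemma perm_submatrix_of_entries m n p q (X : 'M[bool]_(m, n)) (A : 'M[bool]_(p, q))
    (f : 'I_p -> 'I_m) (g : 'I_q -> 'I_n) :
  injective (fun i => row i A) -> injective (fun j => col j A) ->
  (forall i j, X (f i) (g j) = A i j) -> has_perm_submatrix X A.
Proof.
move=> A_row_inj A_col_inj XA; exists f, g; split; last split=> //.
  by move=> i i' eq_fi; apply/A_row_inj/rowP => j; rewrite !mxE -!XA eq_fi.
by move=> j j' eq_gj; apply/A_col_inj/colP => i; rewrite !mxE -!XA eq_gj.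
Qed.

Inductive obstruction := OD4 | OH3 | OH3T | OK5.

(* Dimensions are written as successors so that [all_ord] applies to them. *)
Definition obs_rows o := (match o with OD4 => 3 | OH3 => 2 | OH3T => 3 | OK5 => 4 end).+1.
Definition obs_cols o := (match o with OD4 => 3 | OH3 => 3 | OH3T => 2 | OK5 => 4 end).+1.

Definition obs_matrix o : 'M[bool]_(obs_rows o, obs_cols o) :=
  match o return 'M[bool]_(obs_rows o, obs_cols o) with
  | OD4 => D4 | OH3 => H3 | OH3T => H3^T | OK5 => K5
  end.

Definition entry_of_rows (rows : seq (seq nat)) (i j : nat) : bool :=
  nth 0 (nth [::] rows i) j == 1.

Definition H3_entry (i j : nat) : bool :=
  (j == 0) || entry_of_rows [:: [:: 1; 1; 0]; [:: 0; 1; 1]; [:: 1; 0; 1]] i j.-1.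

Definition obs_entry o : nat -> nat -> bool :=
  match o with
  | OD4 => entry_of_rows [:: [:: 0; 1; 1; 0]; [:: 1; 1; 1; 0];
                             [:: 1; 1; 1; 1]; [:: 0; 0; 1; 1]]
  | OH3 => H3_entry
  | OH3T => fun i j => H3_entry j i
  | OK5 => fun i j => (j + 5 - i) %% 5 <= 2
  end.

Lemma H3E i j : H3 i j = H3_entry i j.
Proof.
rewrite /H3 mxE; case: splitP => k ->; rewrite !mxE //.
by case: k => [[]].
Qed.

Lemma obs_matrixE o i j : obs_matrix o i j = obs_entry o i j.
Proof.
case: o i j => i j; [exact: mxE | exact: H3E | | exact: mxE].
by rewrite [LHS]mxE H3E.
Qed.

Lemma obs_lines_distinct o :
  distinct_lines (fun (i : 'I_(obs_rows o)) (j : 'I_(obs_cols o)) => obs_entry o i j) &&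
  distinct_lines (fun (j : 'I_(obs_cols o)) (i : 'I_(obs_rows o)) => obs_entry o i j).
Proof. by case: o; vm_compute. Qed.

Lemma obs_row_inj o : injective (fun i => row i (obs_matrix o)).
Proof.
move=> i i' /rowP eq_rows; have /andP[/distinct_lines_inj rows_distinct _] := obs_lines_distinct o.
by apply: rows_distinct => j; have := eq_rows j; rewrite !mxE !obs_matrixE.
Qed.

Lemma obs_col_inj o : injective (fun j => col j (obs_matrix o)).
Proof.
move=> j j' /colP eq_cols; have /andP[_ /distinct_lines_inj cols_distinct] := obs_lines_distinct o.
by apply: cols_distinct => i; have := eq_cols i; rewrite !mxE !obs_matrixE.
Qed.

(* Row indices and column indices of the five vertices of a 5-hole. *)
Definition obs_hole o : seq nat * seq nat :=
  match o with
  | OD4 => ([:: 0; 1; 2; 2; 3], [:: 2; 1; 0; 3; 2])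
  | OH3 => ([:: 0; 1; 1; 2; 2], [:: 0; 2; 3; 3; 1])
  | OH3T => ([:: 0; 1; 3; 3; 2], [:: 0; 2; 2; 1; 1])
  | OK5 => ([:: 0; 1; 2; 3; 4], [:: 1; 2; 3; 4; 0])
  end.

Lemma obstruction_has_5hole o : has_5hole (obs_matrix o).
Proof.
apply/has_5holeP.
exists (fun a => inZp (nth 0 (obs_hole o).1 a)), (fun b => inZp (nth 0 (obs_hole o).2 b)).
rewrite (eq_hole_pattern (fun a b => obs_matrixE _ _)).
by case: o; vm_compute.
Qed.

Definition nonadj_pairs : seq ('I_5 * 'I_5) :=
  [seq ab <- [seq (inZp a, inZp b) | a <- iota 0 5, b <- iota 0 5]
     | ~~ ((ab.1 == ab.2) || cyc5_adj ab.1 ab.2)].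

Lemma mem_nonadj_pairs (a b : 'I_5) :
  ~~ ((a == b) || cyc5_adj a b) -> (a, b) \in nonadj_pairs.
Proof.
move=> nonadj_ab; rewrite mem_filter nonadj_ab -(valZpK a) -(valZpK b).
by apply: (allpairs_f (fun a b => (inZp a, inZp b))); rewrite mem_iota ltn_ord.
Qed.

(* A hole pattern is determined by its entries at the non-adjacent pairs. *)
Definition hole_bits (Y : 'I_5 -> 'I_5 -> bool) : bitseq :=
  [seq Y ab.1 ab.2 | ab <- nonadj_pairs].

Definition pattern_of_bits (s : bitseq) (a b : 'I_5) : bool :=
  [|| a == b, cyc5_adj a b | nth false s (index (a, b) nonadj_pairs)].

Lemma pattern_of_hole_bits Y : hole_pattern Y -> pattern_of_bits (hole_bits Y) =2 Y.
Proof.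
move/hole_patternP=> Y_hole a b; rewrite /pattern_of_bits orbA.
have [near_ab | far_ab] := boolP ((a == b) || cyc5_adj a b).
  by have := Y_hole a b; rewrite near_ab => /andP[].
have ab_nonadj := mem_nonadj_pairs far_ab.
by rewrite orFb (nth_map (a, b)) ?index_mem // nth_index.
Qed.

Fixpoint bitseqs n : seq bitseq :=
  if n is n'.+1 then [seq b :: s | b <- [:: true; false], s <- bitseqs n'] else [:: [::]].

Lemma mem_bitseqs s : s \in bitseqs (size s).
Proof.
elim: s => // b s IH.
by apply: (allpairs_f (fun b s => b :: s)) IH; case: b.
Qed.

Definition embeds (Y : 'I_5 -> 'I_5 -> bool) (e : obstruction * (seq nat * seq nat)) :=
  let: (o, (rs, cs)) := e in
  all_ord (fun i : 'I_(obs_rows o) => all_ord (fun j : 'I_(obs_cols o) =>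
    Y (inZp (nth 0 rs i)) (inZp (nth 0 cs j)) == obs_entry o i j)).

(* Found by computer search: every hole pattern realizes one of these
   obstructions, with the given row and column indices into the pattern. *)
Definition hole_embeddings : seq (obstruction * (seq nat * seq nat)) :=
  [:: (OH3, ([:: 2; 0; 3], [:: 2; 3; 1; 4]));
      (OH3, ([:: 2; 3; 0], [:: 3; 1; 2; 4]));
      (OH3T, ([:: 2; 0; 3; 1], [:: 4; 2; 1]));
      (OH3, ([:: 0; 4; 2], [:: 0; 1; 4; 3]));
      (OH3, ([:: 1; 0; 3], [:: 1; 2; 0; 4]));
      (OH3T, ([:: 0; 4; 1; 3], [:: 0; 2; 4]));
      (OH3, ([:: 3; 1; 4], [:: 4; 3; 2; 0]));
      (OH3T, ([:: 3; 4; 1; 2], [:: 0; 2; 3]));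
      (OH3, ([:: 1; 2; 4], [:: 2; 0; 1; 3]));
      (OH3T, ([:: 4; 3; 0; 2], [:: 4; 1; 3]));
      (OH3T, ([:: 1; 4; 2; 0], [:: 3; 1; 0]));
      (OD4, ([:: 3; 4; 0; 2], [:: 0; 4; 3; 1]));
      (OD4, ([:: 4; 0; 1; 3], [:: 1; 0; 4; 2]));
      (OD4, ([:: 0; 4; 3; 1], [:: 3; 4; 0; 2]));
      (OD4, ([:: 1; 0; 4; 2], [:: 4; 0; 1; 3]));
      (OD4, ([:: 2; 1; 0; 3], [:: 0; 1; 2; 4]));
      (OD4, ([:: 0; 1; 2; 4], [:: 2; 1; 4; 3]));
      (OK5, ([:: 4; 3; 2; 1; 0], [:: 0; 4; 3; 2; 1]));
      (OD4, ([:: 4; 3; 2; 0], [:: 2; 3; 0; 1]));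
      (OH3T, ([:: 0; 3; 4; 2], [:: 0; 1; 2]));
      (OH3T, ([:: 0; 3; 4; 1], [:: 3; 0; 1]));
      (OD4, ([:: 1; 2; 3; 0], [:: 3; 2; 1; 4]));
      (OD4, ([:: 2; 3; 0; 1], [:: 4; 3; 2; 0]));
      (OD4, ([:: 3; 2; 1; 4], [:: 1; 2; 4; 0]))].

Lemma hole_patterns_embed_obstructions :
  all (fun s => hole_pattern (pattern_of_bits s) ==>
                has (embeds (pattern_of_bits s)) hole_embeddings)
      (bitseqs (size nonadj_pairs)).
Proof. by vm_compute. Qed.

Lemma hole_pattern_obstruction (Y : 'I_5 -> 'I_5 -> bool) : hole_pattern Y ->
  exists o (f : 'I_(obs_rows o) -> 'I_5) (g : 'I_(obs_cols o) -> 'I_5),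
    forall i j, Y (f i) (g j) = obs_matrix o i j.
Proof.
move=> Y_hole; have bitsY := pattern_of_hole_bits Y_hole.
have := allP hole_patterns_embed_obstructions (hole_bits Y).
rewrite -(size_map (fun ab => Y ab.1 ab.2)) mem_bitseqs (eq_hole_pattern bitsY) Y_hole.
move=> /(_ isT)/implyP/(_ isT)/(nth_find (OD4, ([::], [::]))).
case: (nth _ _ _) => o [rs cs]; rewrite /embeds => /all_ordP embeds_o.
exists o, (fun i => inZp (nth 0 rs i)), (fun j => inZp (nth 0 cs j)) => i j.
by have /all_ordP/(_ j)/eqP := embeds_o i; rewrite bitsY obs_matrixE.
Qed.

Lemma obstructionP m n (X : 'M[bool]_(m, n)) :
  (exists o, has_perm_submatrix X (obs_matrix o)) <->
  (has_perm_submatrix X D4 \/ has_perm_submatrix X H3 \/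
   has_perm_submatrix X H3^T \/ has_perm_submatrix X K5).
Proof.
split=> [[[] ?] | [? | [? | [? | ?]]]];
  by [tauto | exists OD4 | exists OH3 | exists OH3T | exists OK5].
Qed.

Theorem theorem2 (m n : nat) (X : 'M[bool]_(m, n)) :
  has_5hole X <->
  (has_perm_submatrix X D4 \/ has_perm_submatrix X H3 \/
   has_perm_submatrix X H3^T \/ has_perm_submatrix X K5).
Proof.
apply: iff_trans (obstructionP X); split.
  case/has_5holeP=> r [c /hole_pattern_obstruction[o [f [g Y_o]]]].
  exists o; apply: (perm_submatrix_of_entries (f := r \o f) (g := c \o g)).
  - exact: obs_row_inj.
  - exact: obs_col_inj.
  - exact: Y_o.
case=> o /has_5hole_perm_submatrix; apply.
exact: obstruction_has_5hole.
Qed.
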